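(* Let $\mathsf{L}$ be an intermediate logic. Every consistent formula of the form $\neg\phi$ is $\mathcal{ST}$-projective in $\mathsf{L}^\neg$, where $\mathcal{ST}$ is the class of all substitutions that are stable in $\mathsf{L}^\neg$.
   Context: Formulas are built from propositional variables, $\bot,\top$ with $\wedge,\vee,\to$; $\neg\phi:=\phi\to\bot$. An intermediate theory is a set $\mathsf T$ of formulas closed under modus ponens with $\mathsf{IPC}\subseteq\mathsf T\subseteq\mathsf{CPC}$; an intermediate logic is an intermediate theory closed under uniform substitution. $\Gamma\vdash_{\mathsf T}\phi$ means $\phi$ is derivable from $\Gamma\cup\mathsf T$ by modus ponens; $\vdash_{\mathsf T}\phi$ means $\phi\in\mathsf T$. For an intermediate logic $\mathsf L$, $\phi^\neg$ is obtained by replacing every propositional variable $p$ in $\phi$ by $\neg p$, and $\mathsf L^\neg=\{\phi\mid\phi^\neg\in\mathsf L\}$. A substitution is a map on formulas commuting with the connectives and constants; it is stable in $\mathsf L^\neg$ if $\vdash_{\mathsf L^\neg}\sigma(p)\leftrightarrow\neg\neg\sigma(p)$ for all propositional variables $p$. A formula $\psi$ is consistent if $\psi\nvdash_{\mathsf L^\neg}\bot$. For a set $\mathcal S$ of substitutions, $\psi$ is $\mathcal S$-projective in $\mathsf L^\neg$ if there is $\sigma\in\mathcal S$ with $\vdash_{\mathsf L^\neg}\sigma(\psi)$, and $\psi,\sigma(p)\vdash_{\mathsf L^\neg}p$ and $\psi,p\vdash_{\mathsf L^\neg}\sigma(p)$ for all propositional variables $p$. *)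

From Stdlib Require Import Bool.

Inductive form : Type :=
| Var : nat -> form
| Bot : form
| Top : form
| And : form -> form -> form
| Or  : form -> form -> form
| Imp : form -> form -> form.

Definition Neg (a : form) : form := Imp a Bot.
Definition Iff (a b : form) : form := And (Imp a b) (Imp b a).

Fixpoint subst (s : nat -> form) (f : form) : form :=
  match f with
  | Var p => s p
  | Bot => Bot
  | Top => Top
  | And a b => And (subst s a) (subst s b)
  | Or a b => Or (subst s a) (subst s b)
  | Imp a b => Imp (subst s a) (subst s b)
  end.

Inductive IPC : form -> Prop :=
| ax_K a b : IPC (Imp a (Imp b a))
| ax_S a b c : IPC (Imp (Imp a (Imp b c)) (Imp (Imp a b) (Imp a c)))
| ax_andE1 a b : IPC (Imp (And a b) a)
| ax_andE2 a b : IPC (Imp (And a b) b)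
| ax_andI a b : IPC (Imp a (Imp b (And a b)))
| ax_orI1 a b : IPC (Imp a (Or a b))
| ax_orI2 a b : IPC (Imp b (Or a b))
| ax_orE a b c : IPC (Imp (Imp a c) (Imp (Imp b c) (Imp (Or a b) c)))
| ax_efq a : IPC (Imp Bot a)
| ax_top : IPC Top
| ipc_mp a b : IPC (Imp a b) -> IPC a -> IPC b.

Fixpoint beval (v : nat -> bool) (f : form) : bool :=
  match f with
  | Var p => v p
  | Bot => false
  | Top => true
  | And a b => beval v a && beval v b
  | Or a b => beval v a || beval v b
  | Imp a b => implb (beval v a) (beval v b)
  end.

Definition CPC (f : form) : Prop := forall v, beval v f = true.

Definition closed_MP (T : form -> Prop) : Prop :=
  forall a b, T (Imp a b) -> T a -> T b.

Definition intermediate_theory (T : form -> Prop) : Prop :=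
  closed_MP T /\ (forall f, IPC f -> T f) /\ (forall f, T f -> CPC f).

Definition intermediate_logic (L : form -> Prop) : Prop :=
  intermediate_theory L /\ (forall s f, L f -> L (subst s f)).

Inductive derivable (T : form -> Prop) (Gamma : form -> Prop) : form -> Prop :=
| der_hyp f : Gamma f -> derivable T Gamma f
| der_thm f : T f -> derivable T Gamma f
| der_mp a b : derivable T Gamma (Imp a b) -> derivable T Gamma a ->
               derivable T Gamma b.

Definition negsub (f : form) : form := subst (fun p => Neg (Var p)) f.

Definition Lneg (L : form -> Prop) : form -> Prop := fun f => L (negsub f).

Definition single (a : form) : form -> Prop := fun x => x = a.
Definition pair (a b : form) : form -> Prop := fun x => x = a \/ x = b.

Definition stable (T : form -> Prop) (s : nat -> form) : Prop :=
  forall p, T (Iff (s p) (Neg (Neg (s p)))).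

Definition consistent (T : form -> Prop) (psi : form) : Prop :=
  ~ derivable T (single psi) Bot.

Definition projective (S : (nat -> form) -> Prop) (T : form -> Prop) (psi : form) : Prop :=
  exists s, S s /\ T (subst s psi) /\
    (forall p, derivable T (pair psi (s p)) (Var p)) /\
    (forall p, derivable T (pair psi (Var p)) (s p)).

From Stdlib Require Import Arith Bool Lia Classical.

(* If ¬φ is consistent in L^¬ then φ is not a classical tautology, because by
   Glivenko's theorem IPC proves ¬¬φ for every tautology φ.  Fix a valuation v
   refuting φ and let σ(p) be ¬φ → p if v(p) holds and ¬φ ∧ p otherwise.  Under
   ¬φ, σ is equivalent to the identity substitution.  Under ¬¬φ, each σ(p) or
   ¬σ(p), as chosen by v, is provable, so Kalmár's lemma refutes σ(φ); by cases
   on ¬φ / ¬¬φ we get ⊢ ¬σ(φ) = σ(¬φ).  Finally σ is stable: L^¬ proves ¬¬p → p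
   (its substitution instance ¬¬¬p → ¬p is intuitionistic), and ¬¬-stable
   formulas are closed under conjunction and under implications into them. *)

Definition empty_ctx : form -> Prop := fun _ => False.

Definition extend (G : form -> Prop) (a : form) : form -> Prop :=
  fun x => G x \/ x = a.

Fixpoint var_bound (f : form) : nat :=
  match f with
  | Var p => S p
  | Bot | Top => 0
  | And a b | Or a b | Imp a b => Nat.max (var_bound a) (var_bound b)
  end.

Definition literal (s : nat -> form) (v : nat -> bool) (p : nat) : form :=
  if v p then s p else Neg (s p).

Definition literals (v : nat -> bool) (k : nat) : form -> Prop :=
  fun x => exists p, p < k /\ x = literal Var v p.

Definition update (v : nat -> bool) (k : nat) (b : bool) : nat -> bool :=
  fun q => if Nat.eqb q k then b else v q.

Lemma subst_Var f : subst Var f = f.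
Proof. induction f; simpl; congruence. Qed.

Lemma IPC_subst s f : IPC f -> IPC (subst s f).
Proof. induction 1; simpl; econstructor; eauto. Qed.

Section Hilbert.

Variable T : form -> Prop.
Hypothesis T_IPC : forall f, IPC f -> T f.

Local Notation "G ⊢ f" := (derivable T G f) (at level 70).

Lemma der_weaken G H f : G ⊢ f -> (forall x, G x -> H x) -> H ⊢ f.
Proof.
  induction 1; intros; [apply der_hyp | apply der_thm | eapply der_mp]; eauto.
Qed.

Lemma der_assumption G a : extend G a ⊢ a.
Proof. apply der_hyp; now right. Qed.

Lemma der_lift G a f : G ⊢ f -> extend G a ⊢ f.
Proof. intros H; eapply der_weaken; [exact H | now left]. Qed.

Lemma der_ipc_mp G a b : IPC (Imp a b) -> G ⊢ a -> G ⊢ b.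
Proof. intros Hab Ha; eapply der_mp; [apply der_thm, T_IPC, Hab | exact Ha]. Qed.

Lemma deduction G a b : extend G a ⊢ b -> G ⊢ Imp a b.
Proof.
  induction 1 as [f [Hf | ->] | f Hf | c d _ IHcd _ IHc].
  - apply (der_ipc_mp _ f); [apply ax_K | now apply der_hyp].
  - apply (der_ipc_mp _ (Imp a (Imp a a))); [| apply der_thm, T_IPC, ax_K].
    apply (ipc_mp _ _ (ax_S a (Imp a a) a)), ax_K.
  - apply (der_ipc_mp _ f); [apply ax_K | now apply der_thm].
  - eapply der_mp; [apply (der_ipc_mp _ _ _ (ax_S a c d)), IHcd | exact IHc].
Qed.

Lemma der_andI G a b : G ⊢ a -> G ⊢ b -> G ⊢ And a b.
Proof.
  intros Ha Hb; eapply der_mp; [apply (der_ipc_mp _ a); [apply ax_andI |] |]; eauto.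
Qed.

Lemma der_andE1 G a b : G ⊢ And a b -> G ⊢ a.
Proof. apply der_ipc_mp, ax_andE1. Qed.

Lemma der_andE2 G a b : G ⊢ And a b -> G ⊢ b.
Proof. apply der_ipc_mp, ax_andE2. Qed.

Lemma der_orI1 G a b : G ⊢ a -> G ⊢ Or a b.
Proof. apply der_ipc_mp, ax_orI1. Qed.

Lemma der_orI2 G a b : G ⊢ b -> G ⊢ Or a b.
Proof. apply der_ipc_mp, ax_orI2. Qed.

Lemma der_orE G a b c : G ⊢ Or a b -> G ⊢ Imp a c -> G ⊢ Imp b c -> G ⊢ c.
Proof.
  intros Hab Hac Hbc.
  eapply der_mp; [eapply der_mp; [apply (der_ipc_mp _ _ _ (ax_orE a b c)) |] |]; eauto.
Qed.

Lemma der_efq G a : G ⊢ Bot -> G ⊢ a.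
Proof. apply der_ipc_mp, ax_efq. Qed.

Lemma der_dn_intro G a : G ⊢ a -> G ⊢ Neg (Neg a).
Proof.
  intros Ha; apply deduction; eapply der_mp; [apply der_assumption | apply der_lift, Ha].
Qed.

Lemma der_neg_cases G a b :
  extend G a ⊢ Neg b -> extend G (Neg a) ⊢ Neg b -> G ⊢ Neg b.
Proof.
  intros Hpos Hneg; apply deduction in Hpos; apply deduction in Hneg.
  apply deduction.
  assert (Hna : extend G b ⊢ Neg a).
  { apply deduction.
    eapply der_mp; [eapply der_mp; [apply der_lift, der_lift, Hpos | apply der_assumption]
                   | apply der_lift, der_assumption]. }
  eapply der_mp; [eapply der_mp; [apply der_lift, Hneg | exact Hna] |].
  apply der_assumption.
Qed.

Lemma kalmar G s v psi :
  (forall p, p < var_bound psi -> G ⊢ literal s v p) ->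
  G ⊢ (if beval v psi then subst s psi else Neg (subst s psi)).
Proof.
  induction psi as [n| | |a IHa b IHb|a IHa b IHb|a IHa b IHb]; simpl; intros Hlit.
  - apply Hlit; lia.
  - apply deduction, der_assumption.
  - apply der_thm, T_IPC, ax_top.
  - specialize (IHa ltac:(intros; apply Hlit; lia)).
    specialize (IHb ltac:(intros; apply Hlit; lia)).
    destruct (beval v a), (beval v b); simpl;
      try (apply der_andI; assumption); apply deduction.
    + eapply der_mp; [apply der_lift, IHb | eapply der_andE2, der_assumption].
    + eapply der_mp; [apply der_lift, IHa | eapply der_andE1, der_assumption].
    + eapply der_mp; [apply der_lift, IHa | eapply der_andE1, der_assumption].
  - specialize (IHa ltac:(intros; apply Hlit; lia)).
    specialize (IHb ltac:(intros; apply Hlit; lia)).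
    destruct (beval v a), (beval v b); simpl.
    + apply der_orI1, IHa.
    + apply der_orI1, IHa.
    + apply der_orI2, IHb.
    + apply deduction.
      eapply der_orE; [apply der_assumption | apply der_lift, IHa | apply der_lift, IHb].
  - specialize (IHa ltac:(intros; apply Hlit; lia)).
    specialize (IHb ltac:(intros; apply Hlit; lia)).
    destruct (beval v a), (beval v b); simpl; apply deduction.
    + apply der_lift, IHb.
    + eapply der_mp; [apply der_lift, IHb |].
      eapply der_mp; [apply der_assumption | apply der_lift, IHa].
    + apply der_lift, IHb.
    + apply der_efq; eapply der_mp; [apply der_lift, IHa | apply der_assumption].
Qed.

Lemma literals_update v k b :
  forall x, literals (update v k b) (S k) x ->
  extend (literals v k) (if b then Var k else Neg (Var k)) x.
Proof.
  intros x [p [Hp ->]]; unfold literal, update.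
  destruct (Nat.eq_dec p k) as [-> | Hpk].
  - right; now rewrite Nat.eqb_refl.
  - left; exists p; split; [lia |].
    unfold literal; now rewrite (proj2 (Nat.eqb_neq p k) Hpk).
Qed.

Lemma literals_descend a j :
  forall k, (forall v, literals v (j + k) ⊢ Neg a) -> forall v, literals v k ⊢ Neg a.
Proof.
  induction j as [|j IHj]; intros k Hjk v; [exact (Hjk v) |].
  rewrite Nat.add_succ_comm in Hjk.
  specialize (IHj (S k) Hjk).
  apply (der_neg_cases _ (Var k)).
  - eapply der_weaken; [apply (IHj (update v k true)) | apply literals_update].
  - eapply der_weaken; [apply (IHj (update v k false)) | apply literals_update].
Qed.

Lemma glivenko phi : CPC phi -> empty_ctx ⊢ Neg (Neg phi).
Proof.
  intros Htaut.
  assert (Hall : forall v, literals v (var_bound phi + 0) ⊢ Neg (Neg phi)).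
  { intros v; rewrite Nat.add_0_r; apply der_dn_intro.
    generalize (kalmar (literals v (var_bound phi)) Var v phi).
    rewrite Htaut, subst_Var; intros H; apply H.
    intros p Hp; apply der_hyp; now exists p. }
  eapply der_weaken; [apply (literals_descend _ _ 0 Hall (fun _ => true)) |].
  intros x [p [Hp _]]; lia.
Qed.

Lemma der_and_mono G a a' b b' :
  G ⊢ Imp a a' -> G ⊢ Imp b b' -> G ⊢ Imp (And a b) (And a' b').
Proof.
  intros Ha Hb; apply deduction, der_andI.
  - eapply der_mp; [apply der_lift, Ha | eapply der_andE1, der_assumption].
  - eapply der_mp; [apply der_lift, Hb | eapply der_andE2, der_assumption].
Qed.

Lemma der_or_mono G a a' b b' :
  G ⊢ Imp a a' -> G ⊢ Imp b b' -> G ⊢ Imp (Or a b) (Or a' b').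
Proof.
  intros Ha Hb; apply deduction.
  eapply der_orE; [apply der_assumption | |]; apply deduction.
  - apply der_orI1; eapply der_mp; [apply der_lift, der_lift, Ha | apply der_assumption].
  - apply der_orI2; eapply der_mp; [apply der_lift, der_lift, Hb | apply der_assumption].
Qed.

Lemma der_imp_mono G a a' b b' :
  G ⊢ Imp a' a -> G ⊢ Imp b b' -> G ⊢ Imp (Imp a b) (Imp a' b').
Proof.
  intros Ha Hb; apply deduction, deduction.
  eapply der_mp; [apply der_lift, der_lift, Hb |].
  eapply der_mp; [apply der_lift, der_assumption |].
  eapply der_mp; [apply der_lift, der_lift, Ha | apply der_assumption].
Qed.

Lemma der_imp_refl G a : G ⊢ Imp a a.
Proof. apply deduction, der_assumption. Qed.

Lemma der_iff_refl G a : G ⊢ Iff a a.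
Proof. apply der_andI; apply der_imp_refl. Qed.

Lemma subst_iff G s :
  (forall p, G ⊢ Iff (s p) (Var p)) -> forall psi, G ⊢ Iff (subst s psi) psi.
Proof.
  intros Hs psi.
  induction psi as [p| | |a IHa b IHb|a IHa b IHb|a IHa b IHb]; simpl;
    try apply Hs; try apply der_iff_refl;
    apply der_andE1 in IHa as Ha; apply der_andE2 in IHa as Ha';
    apply der_andE1 in IHb as Hb; apply der_andE2 in IHb as Hb';
    apply der_andI; auto using der_and_mono, der_or_mono, der_imp_mono.
Qed.

Definition dn_stable G a : Prop := G ⊢ Imp (Neg (Neg a)) a.

Lemma der_dn_mono G a b : G ⊢ Imp a b -> G ⊢ Imp (Neg (Neg a)) (Neg (Neg b)).
Proof.
  intros Hab; apply der_imp_mono; [| apply der_imp_refl].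
  apply der_imp_mono; [exact Hab | apply der_imp_refl].
Qed.

Lemma dn_stable_neg G a : dn_stable G (Neg a).
Proof.
  apply deduction, deduction.
  eapply der_mp; [apply der_lift, der_assumption |].
  apply der_dn_intro, der_assumption.
Qed.

Lemma dn_stable_and G a b : dn_stable G a -> dn_stable G b -> dn_stable G (And a b).
Proof.
  intros Ha Hb; apply deduction, der_andI.
  - eapply der_mp; [apply der_lift, Ha |].
    eapply der_mp; [apply der_lift, der_dn_mono, der_thm, T_IPC, (ax_andE1 a b) |].
    apply der_assumption.
  - eapply der_mp; [apply der_lift, Hb |].
    eapply der_mp; [apply der_lift, der_dn_mono, der_thm, T_IPC, (ax_andE2 a b) |].
    apply der_assumption.
Qed.

Lemma dn_stable_imp G a b : dn_stable G b -> dn_stable G (Imp a b).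
Proof.
  intros Hb; apply deduction, deduction.
  eapply der_mp; [apply der_lift, der_lift, Hb |].
  eapply der_mp; [| apply der_lift, der_assumption].
  apply der_dn_mono, deduction.
  eapply der_mp; [apply der_assumption | apply der_lift, der_assumption].
Qed.

Lemma iff_dn_of_dn_stable G a : dn_stable G a -> G ⊢ Iff a (Neg (Neg a)).
Proof.
  intros Ha; apply der_andI; [| exact Ha].
  apply deduction, der_dn_intro, der_assumption.
Qed.

Lemma closed_MP_derivable_empty f : closed_MP T -> empty_ctx ⊢ f -> T f.
Proof. intros HMP; induction 1; [contradiction | assumption | eapply HMP; eauto]. Qed.

Variables (phi : form) (v : nat -> bool).

Definition proj_subst (p : nat) : form :=
  if v p then Imp (Neg phi) (Var p) else And (Neg phi) (Var p).

Lemma proj_subst_iff_Var G p : G ⊢ Neg phi -> G ⊢ Iff (proj_subst p) (Var p).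
Proof.
  intros Hnphi; unfold proj_subst; destruct (v p); apply der_andI; apply deduction.
  - eapply der_mp; [apply der_assumption | apply der_lift, Hnphi].
  - apply deduction, der_lift, der_assumption.
  - eapply der_andE2, der_assumption.
  - apply der_andI; [apply der_lift, Hnphi | apply der_assumption].
Qed.

Lemma proj_subst_literal G p : G ⊢ Neg (Neg phi) -> G ⊢ literal proj_subst v p.
Proof.
  intros Hnnphi; unfold literal, proj_subst; destruct (v p); apply deduction.
  - apply der_efq; eapply der_mp; [apply der_lift, Hnnphi | apply der_assumption].
  - eapply der_mp; [apply der_lift, Hnnphi | eapply der_andE1, der_assumption].
Qed.

Lemma proj_subst_refutes :
  beval v phi = false -> empty_ctx ⊢ Neg (subst proj_subst phi).
Proof.
  intros Hv; apply (der_neg_cases _ (Neg phi)).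
  - assert (Hiff : extend empty_ctx (Neg phi) ⊢ Iff (subst proj_subst phi) phi).
    { apply subst_iff; intros p; apply proj_subst_iff_Var, der_assumption. }
    apply deduction.
    eapply der_mp; [apply der_lift, der_assumption |].
    eapply der_mp; [eapply der_andE1, der_lift, Hiff | apply der_assumption].
  - generalize (kalmar (extend empty_ctx (Neg (Neg phi))) proj_subst v phi).
    rewrite Hv; intros H; apply H.
    intros p _; apply proj_subst_literal, der_assumption.
Qed.

Lemma proj_subst_dn_stable G p :
  (forall q, dn_stable G (Var q)) -> dn_stable G (proj_subst p).
Proof.
  intros Hvar; unfold proj_subst; destruct (v p).
  - now apply dn_stable_imp.
  - apply dn_stable_and; [apply dn_stable_neg | apply Hvar]; assumption.
Qed.

End Hilbert.

Lemma Lneg_IPC L : intermediate_logic L -> forall f, IPC f -> Lneg L f.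
Proof. intros [[_ [HI _]] _] f Hf; apply HI, IPC_subst, Hf. Qed.

Lemma Lneg_closed_MP L : intermediate_logic L -> closed_MP (Lneg L).
Proof. intros [[HMP _] _] a b; apply HMP. Qed.

Lemma Lneg_dn_stable_Var L :
  intermediate_logic L -> forall G p, dn_stable (Lneg L) G (Var p).
Proof.
  intros [[_ [HI _]] _] G p; apply der_thm, HI.
  exact (closed_MP_derivable_empty IPC _ ipc_mp
           (dn_stable_neg IPC (fun _ H => H) empty_ctx (Var p))).
Qed.

Theorem lemma4p4 (L : form -> Prop) (HL : intermediate_logic L) (phi : form) :
  consistent (Lneg L) (Neg phi) ->
  projective (stable (Lneg L)) (Lneg L) (Neg phi).
Proof.
  intros Hcons.
  pose proof (Lneg_IPC L HL) as HIPC.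
  pose proof (Lneg_closed_MP L HL) as HMP.
  destruct (classic (CPC phi)) as [Htaut | Hntaut].
  { exfalso; apply Hcons.
    eapply der_mp; [| apply der_hyp; reflexivity].
    eapply der_weaken; [apply (glivenko _ HIPC), Htaut | contradiction]. }
  apply not_all_ex_not in Hntaut as [v Hv]; apply not_true_is_false in Hv.
  exists (proj_subst phi v); split; [| split; [| split]].
  - intros p; apply (closed_MP_derivable_empty _ _ HMP), (iff_dn_of_dn_stable _ HIPC).
    apply proj_subst_dn_stable; [exact HIPC |]; intros q; apply Lneg_dn_stable_Var, HL.
  - apply (closed_MP_derivable_empty _ _ HMP), (proj_subst_refutes _ HIPC), Hv.
  - intros p; eapply der_mp; [eapply (der_andE1 _ HIPC), (proj_subst_iff_Var _ HIPC) |];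
      apply der_hyp; unfold pair; auto.
  - intros p; eapply der_mp; [eapply (der_andE2 _ HIPC), (proj_subst_iff_Var _ HIPC) |];
      apply der_hyp; unfold pair; auto.
Qed.
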